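(* Let $k,r,p>0$ be integers and let $F:\mathbb{N}^k\to\mathbb{N}^r$ be any function. Then there exists $E\subseteq\mathbb{N}$ with $|E|=p$ such that $F$ has at most $k^k\,p$ regressive values on $E^k$.
   Context: $\mathbb{N}=\{0,1,2,\dots\}$. For $x\in\mathbb{N}^k$, $\min(x)$ is the minimum coordinate and $|x|$ the maximum coordinate of $x$. For $B\subseteq\mathbb{N}^k$ and a function $F$ defined on $B$ with values in $\mathbb{N}^r$, an element $y$ is a regressive value of $F$ on $B$ iff there exists $x\in B$ with $F(x)=y$ and $|y|<\min(x)$. *)

From mathcomp Require Import all_boot.
Set Implicit Arguments. Unset Strict Implicit. Unset Printing Implicit Defensive.

(* max coordinate |x| (0 for the empty tuple) *)
Definition tmax (s : seq nat) : nat := foldr maxn 0 s.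
(* min coordinate min(x); for a nonempty sequence this is its least entry *)
Definition tmin (s : seq nat) : nat := foldr minn (head 0 s) s.

Definition regressive_value (k r : nat) (F : k.-tuple nat -> r.-tuple nat)
  (E : seq nat) (y : r.-tuple nat) : Prop :=
  exists x : k.-tuple nat,
    all (fun i => i \in E) x /\ F x = y /\ tmax y < tmin x.

From Stdlib Require Import Classical ClassicalEpsilon.
From mathcomp Require Import all_boot.
Set Implicit Arguments. Unset Strict Implicit. Unset Printing Implicit Defensive.

(* Thin N out to an infinite set H on which F is regressively regular: for
   every order pattern of k-tuples, two tuples of that pattern with the same
   minimum a have the same value as soon as one of them takes a regressive
   value.  Such an H is built by a diagonal argument: once a is chosen, the
   regressive values at tuples with least entry a range over the finite set of
   r-tuples below a, so the infinite Ramsey theorem makes this colouring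
   constant on the rest of the set.  On any p-element E inside H, a regressive
   value is then determined by the minimum (p choices) and the pattern (at most
   k^k choices) of any tuple producing it. *)

Definition unbounded (H : nat -> Prop) := forall n, exists2 m, n <= m & H m.

Definition within (H : nat -> Prop) (s : seq nat) := forall v, v \in s -> H v.

Definition homogeneous (T : Type) n (c : seq nat -> T) (H : nat -> Prop) (b : T) :=
  forall s, size s = n -> sorted ltn s -> within H s -> c s = b.

Definition chain (a : nat -> nat) (S : nat -> nat -> Prop) :=
  forall i, S i (a i) /\ (forall v, S i.+1 v -> S i v /\ a i < v).

Lemma nested_chain (Q : (nat -> Prop) -> nat -> (nat -> Prop) -> Prop) H :
  unbounded H ->
  (forall X, unbounded X -> exists a Y,
     [/\ unbounded Y, X a, (forall v, Y v -> X v /\ a < v) & Q X a Y]) ->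
  exists a S, [/\ S 0 = H, chain a S & forall i, Q (S i) (a i) (S i.+1)].
Proof.
move=> hH step.
pose T := {X : nat -> Prop | unbounded X}.
pose R (X : T) (q : nat * T) := [/\ sval X q.1,
  (forall v, sval q.2 v -> sval X v /\ q.1 < v) & Q (sval X) q.1 (sval q.2)].
have [next hnext] : exists next, forall X, R X (next X).
  apply: choice => X; have [a [Y [hY Xa YX QXY]]] := step _ (svalP X).
  by exists (a, exist _ Y hY).
pose St i := iter i (fun X => (next X).2) (exist _ H hH : T).
exists (fun i => (next (St i)).1), (fun i => sval (St i)).
by split=> // i; case: (hnext (St i)).
Qed.

Section Chain.

Variables (a : nat -> nat) (S : nat -> nat -> Prop).
Hypothesis chain_aS : chain a S.

Lemma chain_mem i : S i (a i).
Proof. exact: (chain_aS i).1. Qed.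

Lemma chain_nested i j v : i <= j -> S j v -> S i v.
Proof.
elim: j => [|j IH]; first by rewrite leqn0 => /eqP ->.
rewrite leq_eqVlt => /predU1P[-> //|lt_ij] /(chain_aS j).2[Sjv _].
exact: IH.
Qed.

Lemma chain_mem0 i : S 0 (a i).
Proof. exact: chain_nested (leq0n i) (chain_mem i). Qed.

Lemma chain_increasing : {homo a : i j / i < j}.
Proof.
by move=> i j lt_ij; apply: ((chain_aS i).2 _ (chain_nested lt_ij (chain_mem j))).2.
Qed.

Lemma chain_ge i : i <= a i.
Proof. by elim: i => // i IH; apply: leq_ltn_trans IH (chain_increasing (ltnSn i)). Qed.

Lemma chain_within_tail i t :
  path ltn (a i) t -> (forall w, w \in t -> exists j, w = a j) -> within (S i.+1) t.
Proof.
move=> st t_a w wt; have [j ew] := t_a w wt.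
have := allP (order_path_min ltn_trans st) w wt; rewrite ew => lt_aij.
apply: chain_nested (chain_mem j); rewrite ltnNge.
apply: contraL lt_aij; rewrite leq_eqVlt => /predU1P[->|/chain_increasing lt_aji].
  by rewrite ltnn.
by rewrite -leqNgt ltnW.
Qed.

End Chain.

Lemma infinitely_often_mem (T : eqType) (L : seq T) (f : nat -> T) :
  (forall i, f i \in L) -> exists2 b, b \in L & forall N, exists2 i, N <= i & f i = b.
Proof.
elim: L f => [|x L IH] f fL; first by have := fL 0.
have [x_often|] := classic (forall N, exists2 i, N <= i & f i = x).
  by exists x; first exact: mem_head.
move=> /not_all_ex_not[N x_late].
have f_late i : f (i + N) \in L.
  have := fL (i + N); rewrite in_cons => /predU1P[fx|//].
  by case: x_late; exists (i + N); rewrite ?leq_addl.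
have [b bL b_often] := IH _ f_late.
exists b; first by rewrite in_cons bL orbT.
move=> M; have [i le_Mi <-] := b_often M.
by exists (i + N) => //; apply: leq_trans le_Mi (leq_addr _ _).
Qed.

Definition ramsey_property (T : eqType) n :=
  forall (L : seq T) (c : seq nat -> T), (forall s, c s \in L) ->
  forall H, unbounded H -> exists H', [/\ unbounded H', forall v, H' v -> H v &
    exists2 b, b \in L & homogeneous n c H' b].

Lemma end_homogeneous_chain (T : eqType) n (L : nat -> seq T) (c : seq nat -> T) H :
  ramsey_property T n -> (forall a t, c (a :: t) \in L a) -> unbounded H ->
  exists a S, [/\ S 0 = H, chain a S & forall i,
    exists2 b, b \in L (a i) & homogeneous n (fun t => c (a i :: t)) (S i.+1) b].
Proof.
move=> ramsey_n cL hH.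
apply: (nested_chain (Q := fun _ a Y =>
  exists2 b, b \in L a & homogeneous n (fun t => c (a :: t)) Y b)) hH _ => X hX.
have [a _ Xa] := hX 0.
have hY : unbounded (fun v => X v /\ a < v).
  move=> m; have [w + Xw] := hX (maxn m a.+1).
  by rewrite geq_max => /andP[le_mw lt_aw]; exists w.
have [Y [hY' YX homY]] := ramsey_n _ _ (cL a) _ hY.
by exists a, Y; split.
Qed.

Lemma ramsey (T : eqType) n : ramsey_property T n.
Proof.
elim: n => [|n IH] L c cL H hH.
  by exists H; split=> //; exists (c [::]) => // s /size0nil ->.
have [a [S [S0 chain_aS hom]]] := end_homogeneous_chain IH (fun a t => cL (a :: t)) hH.
have [col hcol] : exists col : nat -> T, forall i,
    col i \in L /\ homogeneous n (fun t => c (a i :: t)) (S i.+1) (col i).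
  apply: (choice (fun i b => b \in L /\ homogeneous n (fun t => c (a i :: t)) (S i.+1) b)).
  by move=> i; have [b] := hom i; exists b.
have [b bL b_often] := infinitely_often_mem (fun i => (hcol i).1).
exists (fun v => exists2 i, v = a i & col i = b); split.
- move=> N; have [i le_Ni col_i] := b_often N.
  by exists (a i); [apply: leq_trans le_Ni (chain_ge chain_aS i) | exists i].
- by move=> _ [i -> _]; rewrite -S0; exact: (chain_mem0 chain_aS).
exists b => // -[//|v t] [size_t] st Ht.
have [i ev <-] := Ht v (mem_head _ _); subst v.
apply: (hcol i).2 => //; first exact: path_sorted st.
apply: (chain_within_tail chain_aS st) => w wt.
by have [j -> _] := Ht w (mem_behead (s := a i :: t) wt); exists j.
Qed.

Lemma leq_tmax s v : v \in s -> v <= tmax s.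
Proof.
elim: s => // h t IH; rewrite in_cons => /predU1P[->|/IH le_vt].
  exact: leq_maxl.
exact: leq_trans le_vt (leq_maxr _ _).
Qed.

Fixpoint seqs_below (r a : nat) : seq (seq nat) :=
  if r is r'.+1 then [seq i :: t | i <- iota 0 a, t <- seqs_below r' a] else [:: [::]].

Lemma size_seqs_below r a : size (seqs_below r a) = a ^ r.
Proof. by elim: r => //= r IH; rewrite size_allpairs size_iota IH expnS. Qed.

Lemma mem_seqs_below r a w :
  size w = r -> (forall v, v \in w -> v < a) -> w \in seqs_below r a.
Proof.
elim: r w => [|r IH] [|h t] //= [size_t] w_lt.
apply: allpairs_f; first by rewrite mem_iota w_lt ?mem_head.
by apply: IH => // v vt; apply: w_lt; rewrite in_cons vt orbT.
Qed.

Definition regressively_regular m (f : seq nat -> seq nat) (H : nat -> Prop) :=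
  forall s s', size s = m -> size s' = m -> sorted ltn s -> sorted ltn s' ->
    within H s -> within H s' -> head 0 s = head 0 s' ->
    tmax (f s) < head 0 s -> f s = f s'.

Lemma regressively_regular_sub m f H H' :
  (forall v, H' v -> H v) -> regressively_regular m f H -> regressively_regular m f H'.
Proof.
move=> H'H reg s s' ? ? ? ? H's H's'; apply: reg => // v vs.
  exact/H'H/H's.
exact/H'H/H's'.
Qed.

Lemma regressively_regular_refine r m (f : seq nat -> seq nat) H :
  (forall s, size (f s) = r) -> unbounded H ->
  exists H', [/\ unbounded H', forall v, H' v -> H v & regressively_regular m f H'].
Proof.
move=> size_f hH; case: m => [|n].
  by exists H; split=> // -[|? ?] [|? ?].
(* a regressive value at a tuple with least entry a is an r-tuple below a *)
pose c s := if tmax (f s) < head 0 s then Some (f s) else None.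
have cL a t : c (a :: t) \in None :: map Some (seqs_below r a).
  rewrite /c /=; case: ifP => [reg|_]; last exact: mem_head.
  rewrite in_cons map_f ?orbT //; apply: mem_seqs_below => // v /leq_tmax le_v.
  exact: leq_ltn_trans le_v reg.
have [a [S [S0 chain_aS hom]]] := end_homogeneous_chain (@ramsey _ n) cL hH.
exists (fun v => exists i, v = a i); split.
- by move=> N; exists (a N); [exact: (chain_ge chain_aS) | exists N].
- by move=> _ [i ->]; rewrite -S0; exact: (chain_mem0 chain_aS).
move=> [//|v t] [//|v' t'] [size_t] [size_t'] st st' Ht Ht' /= ev' reg; subst v'.
have [i ev] := Ht v (mem_head _ _); subst v.
have tail_in u : path ltn (a i) u -> within (fun v => exists i, v = a i) (a i :: u) ->
    within (S i.+1) u.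
  by move=> su Hu; apply: (chain_within_tail chain_aS su) => w wu; apply/Hu/mem_behead.
have [b _ hb] := hom i.
have := hb t' size_t' (path_sorted st') (tail_in _ st' Ht').
rewrite -(hb t size_t (path_sorted st) (tail_in _ st Ht)) /c /= reg.
by case: ifP => // _ [].
Qed.

Lemma regressively_regular_refine_all (I : eqType) r (m : I -> nat)
    (G : I -> seq nat -> seq nat) (l : seq I) H :
  (forall q s, size (G q s) = r) -> unbounded H ->
  exists H', [/\ unbounded H', forall v, H' v -> H v &
    forall q, q \in l -> regressively_regular (m q) (G q) H'].
Proof.
move=> size_G; elim: l H => [|q l IH] H hH; first by exists H.
have [H1 [hH1 H1H reg1]] := IH H hH.
have [H2 [hH2 H2H1 reg2]] := regressively_regular_refine (m q) (size_G q) hH1.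
exists H2; split=> [//|v /H2H1/H1H //|q'].
rewrite in_cons => /predU1P[-> //|q'l].
exact: regressively_regular_sub H2H1 (reg1 _ q'l).
Qed.

Lemma unbounded_uniq_seq p H :
  unbounded H -> exists E, [/\ uniq E, size E = p & within H E].
Proof.
move=> hH; elim: p => [|p [E [uE sE EH]]]; first by exists [::].
have [m lt_Em Hm] := hH (tmax E).+1.
exists (m :: E); split=> /=; last by move=> v /predU1P[->|/EH].
  by rewrite uE andbT; apply: contraL lt_Em => /leq_tmax; rewrite ltnNge => ->.
by rewrite sE.
Qed.

Lemma foldr_minn_le d s v : v \in s -> foldr minn d s <= v.
Proof.
elim: s => // h t IH; rewrite in_cons => /predU1P[->|/IH le_tv] /=.
  exact: geq_minl.
by rewrite geq_min le_tv orbT.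
Qed.

Lemma foldr_minn_mem d s : foldr minn d s \in d :: s.
Proof.
elim: s => [|h t IH] /=; first exact: mem_head.
rewrite /minn; case: ifP => _; first by rewrite !in_cons eqxx orbT.
by move: IH; rewrite !in_cons => /orP[->|->]; rewrite ?orbT.
Qed.

Lemma tmin_mem x : 0 < size x -> tmin x \in x.
Proof.
case: x => // h t _; change (foldr minn h (h :: t) \in h :: t).
by have := foldr_minn_mem h (h :: t); rewrite in_cons => /predU1P[->|]; rewrite ?mem_head.
Qed.

Definition entries (x : seq nat) := sort leq (undup x).

Definition pattern (x : seq nat) := [seq index v (entries x) | v <- x].

Definition fill_pattern k (rho s : seq nat) : k.-tuple nat :=
  [tuple nth 0 s (nth 0 rho i) | i < k].

Lemma mem_entries x : entries x =i x.
Proof. by move=> v; rewrite mem_sort mem_undup. Qed.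

Lemma uniq_entries x : uniq (entries x).
Proof. by rewrite sort_uniq undup_uniq. Qed.

Lemma sorted_entries x : sorted ltn (entries x).
Proof.
by rewrite ltn_sorted_uniq_leq uniq_entries sort_sorted //; apply: leq_total.
Qed.

Lemma nth_entries_pattern x : [seq nth 0 (entries x) i | i <- pattern x] = x.
Proof.
rewrite -map_comp -[RHS]map_id; apply/eq_in_map => v xv /=.
by rewrite nth_index // mem_entries.
Qed.

Lemma fill_patternK k (x : k.-tuple nat) : fill_pattern k (pattern x) (entries x) = x.
Proof.
apply: eq_from_tnth => i; rewrite tnth_mktuple (tnth_nth 0).
rewrite -(nth_map 0 0 (nth 0 (entries x))) ?nth_entries_pattern //.
by rewrite size_map size_tuple.
Qed.

Lemma head_entries x : head 0 (entries x) = tmin x.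
Proof.
case: x => [|v x]; first by [].
have := sorted_entries (v :: x); have := mem_entries (v :: x).
case: (entries _) => [/(_ v)|h t ht st /=]; first by rewrite mem_head.
apply/eqP; rewrite eqn_leq foldr_minn_le ?andbT -?ht ?mem_head //.
have := @tmin_mem (v :: x) isT; rewrite -ht in_cons => /predU1P[-> //|].
by move=> /(allP (order_path_min ltn_trans st)) /ltnW.
Qed.

Lemma size_entries x : size (entries x) = size (undup (pattern x)).
Proof.
have index_uniq : uniq [seq index v (entries x) | v <- entries x].
  rewrite map_inj_in_uniq; first exact: uniq_entries.
  by move=> u w ux wx e; rewrite -(nth_index 0 ux) e nth_index.
rewrite -[LHS](size_map (index^~ (entries x))); apply: perm_size.
apply: uniq_perm; rewrite ?undup_uniq // => i.
by rewrite mem_undup; apply: eq_mem_map => v; rewrite mem_entries.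
Qed.

Lemma pattern_mem_seqs_below x : pattern x \in seqs_below (size x) (size x).
Proof.
apply: mem_seqs_below; first by rewrite size_map.
move=> _ /mapP[v xv ->].
have : index v (entries x) < size (entries x) by rewrite index_mem mem_entries.
by move/leq_trans; apply; rewrite size_sort size_undup.
Qed.

Lemma regressive_value_of_pattern k r (F : k.-tuple nat -> r.-tuple nat) H
    (x x' : k.-tuple nat) :
  regressively_regular (size (undup (pattern x)))
    (fun s => val (F (fill_pattern k (pattern x) s))) H ->
  within H x -> within H x' -> tmin x = tmin x' -> pattern x = pattern x' ->
  tmax (F x) < tmin x -> F x = F x'.
Proof.
move=> reg Hx Hx' eq_min eq_pat regx; apply: val_inj.
rewrite -[in LHS](fill_patternK x) -(fill_patternK x') -eq_pat.
apply: reg; rewrite ?sorted_entries ?head_entries ?fill_patternK ?size_entries ?eq_pat //.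
- by move=> v; rewrite mem_entries => /Hx.
- by move=> v; rewrite mem_entries => /Hx'.
Qed.

Lemma size_le_labels (T U : eqType) (P : T -> U -> Prop) (s : seq T) (L : seq U) :
  uniq s -> (forall y, y \in s -> exists2 l, l \in L & P y l) ->
  (forall y y' l, y \in s -> y' \in s -> P y l -> P y' l -> y = y') ->
  size s <= size L.
Proof.
elim: s L => [//|y s IH] L /= /andP[ys us] lab inj.
have s_sub z : z \in s -> z \in y :: s by move=> zs; rewrite in_cons zs orbT.
have [l lL Pyl] := lab y (mem_head _ _).
rewrite (perm_size (perm_to_rem lL)) ltnS.
apply: IH => // [y' y's|y1 y2 l' /s_sub y1s /s_sub y2s]; last exact: inj.
have [l' l'L Py'l'] := lab y' (s_sub _ y's).
exists l' => //; move: l'L; rewrite (perm_mem (perm_to_rem lL)) in_cons.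
case/predU1P=> [el|//]; rewrite el in Py'l'.
by move: ys; rewrite -(inj y' y l (s_sub _ y's) (mem_head _ _) Py'l' Pyl) y's.
Qed.

Theorem theorem0p2 (k r p : nat) (hk : 0 < k) (hr : 0 < r) (hp : 0 < p)
  (F : k.-tuple nat -> r.-tuple nat) :
  exists E : seq nat, uniq E /\ size E = p /\
    forall s : seq (r.-tuple nat), uniq s ->
      (forall y, y \in s -> regressive_value F E y) ->
      size s <= k ^ k * p.
Proof.
have unbounded_all : unbounded (fun _ => True) by move=> n; exists n.
have [H [hH _ regH]] := regressively_regular_refine_all (fun rho => size (undup rho))
  (seqs_below k k) (fun rho s => size_tuple (F (fill_pattern k rho s))) unbounded_all.
have [E [uE sE EH]] := unbounded_uniq_seq p hH.
exists E; split=> //; split=> // s us sreg.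
pose L := [seq (e, rho) | e <- E, rho <- seqs_below k k].
have -> : k ^ k * p = size L by rewrite size_allpairs size_seqs_below sE mulnC.
apply: (size_le_labels (P := fun y l => exists x : k.-tuple nat,
  [/\ all (mem E) x, F x = y, tmax y < tmin x & (tmin x, pattern x) = l])) => //.
  move=> y /sreg[x [xE [Fx reg]]]; exists (tmin x, pattern x); last by exists x.
  apply: allpairs_f; first by apply: (allP xE); rewrite tmin_mem ?size_tuple.
  by have := pattern_mem_seqs_below x; rewrite size_tuple.
move=> _ _ _ _ _ [x [xE <- reg <-]] [x' [x'E <- _ [eq_min eq_pat]]].
have within_E (z : k.-tuple nat) : all (mem E) z -> within H z.
  by move=> zE v /(allP zE) /EH.
apply: (regressive_value_of_pattern _ (within_E _ xE) (within_E _ x'E)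
  (esym eq_min) (esym eq_pat) reg).
by apply: regH; have := pattern_mem_seqs_below x; rewrite size_tuple.
Qed.
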